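(* Let $(\mathcal{S},d_{\mathcal{S}})$ and $(\mathcal{A},d_{\mathcal{A}})$ be metric spaces, $\gamma\in[0,1)$, and $\rho$ an initial state distribution on $\mathcal{S}$. Let $(\pi,p)$ and $(\pi',p')$ be two policy-configuration pairs such that $\pi'$ is $L_{\pi'}$-LC and $p'$ is $L_{p'}$-LC. If $\gamma L_{p'}(1+L_{\pi'})<1$, then $$\mathcal{W}\big(\mu_{\pi',p'},\mu_{\pi,p}\big)\le \frac{\gamma}{1-\gamma L_{p'}(1+L_{\pi'})}\int_{\mathcal{S}}\mu_{\pi,p}(ds)\,\mathcal{W}\big(p'_{\pi'}(\cdot|s),p_{\pi}(\cdot|s)\big).$$
   Context: A configuration is a Markov kernel $p$ assigning to each $(s,a)\in\mathcal{S}\times\mathcal{A}$ a probability measure $p(\cdot|s,a)$ on $\mathcal{S}$; a policy is a Markov kernel $\pi$ assigning to each $s$ a probability measure $\pi(\cdot|s)$ on $\mathcal{A}$. The state-state kernel is $p_\pi(ds'|s)=\int_{\mathcal{A}}\pi(da|s)p(ds'|s,a)$. The $\gamma$-discounted stationary distribution is $\mu_{\pi,p}=(1-\gamma)\sum_{t\ge0}\gamma^t\rho\, p_\pi^t$, equivalently the solution of $\mu_{\pi,p}=(1-\gamma)\rho+\gamma\,\mu_{\pi,p}p_\pi$. For probability measures $\mu,\nu$ on a metric space, $\mathcal{W}(\mu,\nu)=\sup_{\|f\|_L\le1}|\int f\,d(\mu-\nu)|$, where $\|f\|_L$ is the Lipschitz semi-norm. Product metrics are sums: $d_{\mathcal{S}\times\mathcal{A}}((s,a),(\bar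 s,\bar a))=d_{\mathcal{S}}(s,\bar s)+d_{\mathcal{A}}(a,\bar a)$. $p'$ is $L_{p'}$-LC if $\mathcal{W}(p'(\cdot|s,a),p'(\cdot|\bar s,\bar a))\le L_{p'}d_{\mathcal{S}\times\mathcal{A}}((s,a),(\bar s,\bar a))$ for all pairs; $\pi'$ is $L_{\pi'}$-LC if $\mathcal{W}(\pi'(\cdot|s),\pi'(\cdot|\bar s))\le L_{\pi'}d_{\mathcal{S}}(s,\bar s)$ for all $s,\bar s$. *)

From HB Require Import structures.
From mathcomp Require Import all_boot all_order all_algebra.
From mathcomp Require Import all_classical all_reals all_analysis.
Set Implicit Arguments. Unset Strict Implicit. Unset Printing Implicit Defensive.
Import Order.TTheory GRing.Theory Num.Theory.
Local Open Scope classical_set_scope.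
Local Open Scope ring_scope.

Section defs.
Context {R : realType}.

Definition is_metric {X : Type} (dX : X -> X -> R) : Prop :=
  (forall x y, 0 <= dX x y) /\ (forall x y, dX x y = 0 <-> x = y) /\
  (forall x y, dX x y = dX y x) /\ (forall x y z, dX x z <= dX x y + dX y z).

Definition dopen {X : Type} (dX : X -> X -> R) (U : set X) : Prop :=
  forall x, U x -> exists2 e : R, 0 < e & [set y | dX x y < e] `<=` U.

Definition borel_of {d} {X : measurableType d} (dX : X -> X -> R) : Prop :=
  forall A : set X, measurable A <-> <<s dopen dX >> A.

Definition lip1 {X : Type} (dX : X -> X -> R) (f : X -> R) : Prop :=
  forall x y, `|f x - f y| <= dX x y.

Definition W_test {d} {X : measurableType d} (dX : X -> X -> R) (f : X -> R) : Prop :=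
  [/\ measurable_fun setT f, exists M : R, forall x, `|f x| <= M & lip1 dX f].

Definition Wdist {d} {X : measurableType d} (dX : X -> X -> R)
    (mu nu : {measure set X -> \bar R}) : \bar R :=
  ereal_sup [set `| (\int[mu]_x (f x)%:E - \int[nu]_x (f x)%:E)%E |%E
            | f in W_test dX].

End defs.

Local Open Scope ereal_scope.

(** state-state kernel p_pi(ds'|s) = int_A pi(da|s) p(ds'|s,a) ; this is
    the library's kernel composition [pi \; p] (= kcomp pi p). *)
Definition ss_kernel {R : realType} {dS dA} {S : measurableType dS}
    {A : measurableType dA} (pi : R.-pker S ~> A) (p : R.-pker (S * A)%type ~> S)
    : R.-ker S ~> S := mkcomp pi p.

Section mpush.
Context {R : realType} {dS} {S : measurableType dS}.
Variables (m : {measure set S -> \bar R}) (K : R.-ker S ~> S).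

Definition mpush (U : set S) : \bar R := \int[m]_s K s U.

Let mpush0 : mpush set0 = 0.
Proof.
by rewrite /mpush (eq_integral (cst 0)) ?integral0// => y _; rewrite measure0.
Qed.

Let mpush_ge0 U : 0 <= mpush U. Proof. exact: integral_ge0. Qed.

Let mpush_sigma_additive : semi_sigma_additive mpush.
Proof.
move=> U mU tU mUU; rewrite [X in _ --> X](_ : _ =
  \int[m]_y (\sum_(n <oo) K y (U n))); last first.
  apply: eq_integral => V _.
  by apply/esym/cvg_lim => //; exact/measure_semi_sigma_additive.
apply/cvg_closeP; split.
  by apply: is_cvg_nneseries => n _ _; exact: integral_ge0.
rewrite closeE// integral_nneseries// => n.
exact: (measurable_kernel K _ (mU n)).
Qed.

HB.instance Definition _ := isMeasure.Build _ _ R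
  mpush mpush0 mpush_ge0 mpush_sigma_additive.

Definition mmpush : {measure set S -> \bar R} := mpush.
End mpush.

Fixpoint miter {R : realType} {dS} {S : measurableType dS}
    (rho : {measure set S -> \bar R}) (K : R.-ker S ~> S) (t : nat)
    : {measure set S -> \bar R} :=
  match t with 0 => rho | t'.+1 => mmpush (miter rho K t') K end.

Definition disc_stat {R : realType} {dS dA} {S : measurableType dS}
    {A : measurableType dA} (gamma : R) (rho : {measure set S -> \bar R})
    (pi : R.-pker S ~> A) (p : R.-pker (S * A)%type ~> S) (U : set S) : \bar R :=
  (1 - gamma)%:E *
    \sum_(0 <= t <oo) (gamma ^+ t)%:E * miter rho (ss_kernel pi p) t U.

From HB Require Import structures.
From mathcomp Require Import all_boot all_order all_algebra.
From mathcomp Require Import all_classical all_reals all_analysis.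
From mathcomp Require Import ring lra.
Import Order.TTheory GRing.Theory Num.Theory.
Import measurable_realfun.
Local Open Scope classical_set_scope.
Local Open Scope ring_scope.

(* Both discounted stationary distributions are fixed points,
   mu = (1 - gamma) rho + gamma mu K and mu' = (1 - gamma) rho + gamma mu' K',
   where K = p_pi and K' = p'_pi'. Hence, for a bounded test function g,
     mu' g - mu g = gamma (mu' (K' g) - mu (K' g)) + gamma mu (K' g - K g).
   If g is c-Lipschitz, the second term is at most
   gamma c int mu(ds) W(K'(.|s), K(.|s)), and the Lipschitz continuity of
   pi' and p' makes K' g Lipschitz with constant c L_p' (1 + L_pi'), so the
   first term has the same shape with a larger constant.  Unrolling n times
   leaves a remainder gamma^n sup |g| that vanishes as n grows, while the
   constants sum to a geometric series of ratio gamma L_p' (1 + L_pi'). *)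

Lemma le_geometric_bound {R : realType} (q a b x : R) : 0 <= q < 1 ->
  (forall n, x <= q ^+ n * a + b) -> x <= b.
Proof.
move=> /andP[q0 q1] xb.
have cq : (fun n => q ^+ n * a + b) @ \oo --> (b : R^o).
  rewrite -[b in _ --> b]add0r; apply: cvgD; last exact: cvg_cst.
  under eq_fun do rewrite mulrC.
  by apply: cvg_geometric; rewrite ger0_norm.
by rewrite -(cvg_lim _ cq)//; apply: limr_ge; [exact: cvgP cq | exact: nearW].
Qed.

Lemma nneseries_geometric {R : realType} (q : R) : 0 <= q < 1 ->
  (\sum_(0 <= k <oo) (q ^+ k)%:E)%E = ((1 - q)^-1)%:E.
Proof.
move=> /andP[q0 q1]; apply: cvg_lim => //; apply/fine_cvgP; split.
  by apply: nearW => n; rewrite sumEFin.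
have := @cvg_geometric_series _ 1 q; rewrite ger0_norm// div1r => /(_ q1).
apply: cvg_trans; apply: near_eq_cvg; apply: nearW => n /=.
by rewrite sumEFin /series /=; apply: eq_bigr => k _; rewrite /geometric mul1r.
Qed.

Section mean.
Context {R : realType} {d} {X : measurableType d}.
Local Open Scope ereal_scope.

Definition mbounded (M : R) (g : X -> R) : Prop :=
  measurable_fun setT g /\ forall x, (`|g x| <= M)%R.

Definition lipschitz_by (dX : X -> X -> R) (c : R) (g : X -> R) : Prop :=
  forall x y, (`|g x - g y| <= c * dX x y)%R.

(* [fine] sends an infinite integral to 0; [mean] is only used on bounded [g]
   and probability measures [m], where the integral is finite. *)
Definition mean (m : {measure set X -> \bar R}) (g : X -> R) : R :=
  fine (\int[m]_x (g x)%:E).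

(* No measurability is required of [h]: in the theorem the integrand
   [s |-> Wdist (K' s) (K s)] is not known to be measurable. *)
Lemma ge0_le_integral_nonmeasurable (m : {measure set X -> \bar R})
    (f h : X -> \bar R) :
  (forall x, 0 <= f x) -> (forall x, f x <= h x) ->
  \int[m]_x f x <= \int[m]_x h x.
Proof.
move=> f0 fh; have h0 x : 0 <= h x := le_trans (f0 x) (fh x).
rewrite !ge0_integralTE//; apply: le_ereal_sup => _ [s /= sf <-].
by exists s => //= x; exact: le_trans (sf x) (fh x).
Qed.

Lemma ge0_le_integralZ (m : {measure set X -> \bar R}) (f : X -> R)
    (W : X -> \bar R) (c : R) :
  measurable_fun setT f -> (forall x, (0 <= f x)%R) -> (0 <= c)%R ->
  (forall x, 0 <= W x) -> (forall x, (f x)%:E <= c%:E * W x) ->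
  \int[m]_x (f x)%:E <= c%:E * \int[m]_x W x.
Proof.
move=> mf f0 c0 W0 fW; have [c_eq0|c_neq0] := eqVneq c 0%R.
  rewrite c_eq0 mul0e -(integral0 m setT) ge0_le_integral//.
  - by move=> x _; rewrite lee_fin.
  - exact/measurable_EFinP.
  - by move=> x _; have := fW x; rewrite c_eq0 mul0e.
have c_gt0 : (0 < c)%R by rewrite lt_def c_neq0.
rewrite (eq_integral (fun x => c%:E * (f x / c)%:E)); last first.
  by move=> x _; rewrite -EFinM mulrC divfK.
rewrite ge0_integralZl//; last 2 first.
- by apply/measurable_EFinP; exact: measurable_funM.
- by move=> x _; rewrite lee_fin divr_ge0.
rewrite lee_pmul2l ?lte_fin//; apply: ge0_le_integral_nonmeasurable => x.
  by rewrite lee_fin divr_ge0.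
have := fW x; have := W0 x; case: (W x) => [r| |]//= _ => [|_]; last exact: leey.
by rewrite -EFinM !lee_fin ler_pdivrMr// mulrC.
Qed.

Lemma mbounded_cst (c : R) : mbounded `|c| (fun=> c).
Proof. by split=> // x; exact: measurable_cst. Qed.

Lemma mbounded_ge0 {M g} : mbounded M g -> (0 <= M)%R.
Proof. by case=> _ /(_ point); exact: le_trans. Qed.

Lemma mbounded_addr_ge0 {M g} x : mbounded M g -> (0 <= g x + M)%R.
Proof. by case=> _ /(_ x); rewrite ler_norml => /andP[? _]; lra. Qed.

Lemma mbounded_addr {M g} : mbounded M g -> mbounded (M + M) (fun x => g x + M)%R.
Proof.
move=> gM; split; first by apply: measurable_funD => //; case: gM.
move=> x; rewrite (le_trans (ler_normD _ _))// [`|M|%R]ger0_norm ?lerD2r.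
- by case: gM.
- exact: mbounded_ge0 gM.
Qed.

Context {m : {measure set X -> \bar R}} (m1 : m setT = 1).

Lemma integrable_mbounded {M g} : mbounded M g -> m.-integrable setT (EFin \o g).
Proof.
move=> [mg gM]; apply: measurable_bounded_integrable => //; first by rewrite m1 ltry.
exists M; split; first exact: num_real.
by move=> N MN x _; exact: le_trans (gM x) (ltW MN).
Qed.

Lemma integral_mean {M g} : mbounded M g -> \int[m]_x (g x)%:E = (mean m g)%:E.
Proof.
by move=> gM; rewrite /mean fineK// integrable_fin_num// (integrable_mbounded gM).
Qed.

Lemma mean_cst c : mean m (fun=> c) = c.
Proof. by rewrite /mean integral_cst// m1 mule1. Qed.

Lemma mean_add_cst {M g} c : mbounded M g ->
  mean m (fun x => g x + c)%R = (mean m g + c)%R.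
Proof.
move=> gM; rewrite /mean; under eq_integral do rewrite EFinD.
rewrite integralD//; first last.
- exact: integrable_mbounded (mbounded_cst c).
- exact: integrable_mbounded gM.
by rewrite (integral_mean gM) integral_cst// m1 mule1.
Qed.

Lemma dist_mean_le_integral {M N f h} : mbounded M f -> mbounded N h ->
  (`|mean m f - mean m h|)%:E <= \int[m]_x (`|f x - h x|)%:E.
Proof.
move=> fM hM; rewrite -abse_EFin EFinB -(integral_mean fM) -(integral_mean hM).
rewrite -integralB_EFin//.
  2, 3: by [exact: integrable_mbounded fM | exact: integrable_mbounded hM].
under [X in _ <= X]eq_integral do rewrite -abse_EFin EFinB.
apply: le_abse_integral => //.
by apply: emeasurable_funB; apply/measurable_EFinP; [case: fM | case: hM].
Qed.

Lemma norm_mean_le {M g} : mbounded M g -> (`|mean m g| <= M)%R.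
Proof.
move=> gM; rewrite -lee_fin.
have := dist_mean_le_integral gM (mbounded_cst 0%R).
rewrite mean_cst subr0 => /le_trans; apply.
rewrite -[M%:E]mule1 -m1 -integral_cst//; apply: ge0_le_integral => //.
- apply/measurable_EFinP; apply: measurableT_comp => //.
  by apply: measurable_funB => //; case: gM.
- by move=> x _; rewrite subr0 lee_fin; case: gM.
Qed.

Lemma dist_mean_le_integralZ {M N f h} (W : X -> \bar R) (c : R) :
  mbounded M f -> mbounded N h -> (0 <= c)%R -> (forall x, 0 <= W x) ->
  (forall x, (`|f x - h x|)%:E <= c%:E * W x) ->
  (`|mean m f - mean m h|)%:E <= c%:E * \int[m]_x W x.
Proof.
move=> fM hM c0 W0 fhW; apply: le_trans (dist_mean_le_integral fM hM) _.
apply: ge0_le_integralZ => //.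
by apply: measurableT_comp => //; apply: measurable_funB; [case: fM | case: hM].
Qed.

Lemma dist_mean_le_uniform {M N f h} (e : R) : mbounded M f -> mbounded N h ->
  (forall x, `|f x - h x| <= e)%R -> (`|mean m f - mean m h| <= e)%R.
Proof.
move=> fM hM fhe; rewrite -lee_fin -[e%:E]mule1 -m1 -integral_cst//.
rewrite -[X in _ <= X]mul1e; apply: (dist_mean_le_integralZ _ _ fM hM) => // x.
  by rewrite lee_fin; exact: le_trans (fhe x).
by rewrite mul1e lee_fin.
Qed.

End mean.

Section Wdist_mean.
Context {R : realType} {d} {X : measurableType d} (dX : X -> X -> R).
Local Open Scope ereal_scope.

Lemma Wdist_ge0 (mu nu : {measure set X -> \bar R}) :
  (forall x y, (0 <= dX x y)%R) -> 0 <= Wdist dX mu nu.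
Proof.
move=> dX0; have test0 : W_test dX (fun=> 0%R).
  split; [exact: measurable_cst | by exists 0%R => x; rewrite normr0 |].
  by move=> x y; rewrite subrr normr0.
exact: le_trans (abse_ge0 _) (ereal_sup_ubound (ex_intro2 _ _ _ test0 erefl)).
Qed.

Lemma dist_mean_le_Wdist {mu nu : {measure set X -> \bar R}} {M c g} :
  mu setT = 1 -> nu setT = 1 -> (0 <= c)%R -> mbounded M g ->
  lipschitz_by dX c g ->
  (`|mean mu g - mean nu g|)%:E <= c%:E * Wdist dX mu nu.
Proof.
move=> mu1 nu1 c0 gM gc; have [c_eq0|c_neq0] := eqVneq c 0%R.
  have -> : g = fun=> g point.
    apply/funext => x; apply/eqP; rewrite -subr_eq0 -normr_le0.
    by have := gc x point; rewrite c_eq0 mul0r.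
  by rewrite !mean_cst// subrr normr0 c_eq0 mul0e.
have c_gt0 : (0 < c)%R by rewrite lt_def c_neq0.
pose f x := (g x / c)%R.
have f_test : W_test dX f.
  split; first by apply: measurable_funM => //; case: gM.
    exists (M / c)%R => x; rewrite /f normf_div [`|c|%R]gtr0_norm//.
    by rewrite ler_pM2r ?invr_gt0//; case: gM.
  move=> x y; rewrite /f -mulrBl normf_div [`|c|%R]gtr0_norm//.
  by rewrite ler_pdivrMr// mulrC.
have meanE (m : {measure set X -> \bar R}) : m setT = 1 ->
    \int[m]_x (f x)%:E = (mean m g / c)%:E.
  move=> m1; under eq_integral do rewrite /f EFinM muleC.
  rewrite integralZl//; last apply: (integrable_mbounded m1 gM).
  by rewrite (integral_mean m1 gM) -EFinM mulrC.
have := ereal_sup_ubound (ex_intro2 _ _ f f_test erefl) : _ <= Wdist dX mu nu.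
rewrite !meanE// -EFinB -mulrBl abse_EFin normf_div [`|c|%R]gtr0_norm//.
move=> h; rewrite -(divfK c_neq0 `|mean mu g - mean nu g|%R) EFinM.
by rewrite [X in X <= _]muleC lee_wpmul2l// lee_fin.
Qed.

End Wdist_mean.

Section kmean.
Context {R : realType} {d d'} {X : measurableType d} {Y : measurableType d'}.

Definition kmean (K : Y -> {measure set X -> \bar R}) (g : X -> R) (y : Y) : R :=
  mean (K y) g.

Lemma kmean_add_cst {K : Y -> {measure set X -> \bar R}} {M g} c y :
  (forall y, K y setT = 1%E) -> mbounded M g ->
  kmean K (fun x => g x + c) y = kmean K g y + c.
Proof. by move=> K1 gM; exact: (mean_add_cst (K1 y) c gM). Qed.

Lemma mbounded_kmean {K : R.-ker Y ~> X} {M g} :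
  (forall y, K y setT = 1%E) -> mbounded M g -> mbounded M (kmean K g).
Proof.
move=> K1 gM; split; last by move=> y; exact: (norm_mean_le (K1 y) gM).
(* Measurability of kernel integrals needs a nonnegative integrand: shift by M. *)
have -> : kmean K g = fun y => kmean K (fun x => g x + M) y - M.
  by apply/funext => y; rewrite (kmean_add_cst M y K1 gM) addrK.
apply: measurable_funB => //; apply: measurableT_comp => //.
apply: measurable_fun_integral_kernel.
- by move=> U mU; exact: measurable_kernel.
- by move=> x; rewrite lee_fin (mbounded_addr_ge0 x gM).
- by apply/measurable_EFinP; case: (mbounded_addr gM).
Qed.

End kmean.

Section integral_mpush.
Context {R : realType} {dS} {S : measurableType dS}.
Variables (m : {measure set S -> \bar R}) (K : R.-ker S ~> S).
Hypotheses (m_fin : (m setT < +oo)%E) (K_uub : measure_fam_uub K).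
Local Open Scope ereal_scope.

(* [mmpush m K] is the composition [kconst \; ksnd] of kernels out of [unit],
   so that [integral_kcomp] applies to it. *)
Definition kconst : unit -> {measure set S -> \bar R} := fun=> m.

Let measurable_kconst U : measurable U -> measurable_fun setT (kconst ^~ U).
Proof. by move=> _; exact: measurable_cst. Qed.

HB.instance Definition _ := isKernel.Build _ _ _ _ R kconst measurable_kconst.

Let kconst_uub : measure_fam_uub kconst.
Proof.
exists (fine (m setT) + 1)%R => x.
have mfin : m setT \is a fin_num by rewrite ge0_fin_numE.
by rewrite /kconst EFinD fineK// lteDl// lte01.
Qed.

HB.instance Definition _ := Kernel_isFinite.Build _ _ _ _ R kconst kconst_uub.

Definition ksnd : unit * S -> {measure set S -> \bar R} := fun x => K x.2.

Let measurable_ksnd U : measurable U -> measurable_fun setT (ksnd ^~ U).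
Proof.
by move=> mU; exact: measurableT_comp (measurable_kernel K _ mU) measurable_snd.
Qed.

HB.instance Definition _ := isKernel.Build _ _ _ _ R ksnd measurable_ksnd.

Let ksnd_uub : measure_fam_uub ksnd.
Proof. by have [r Kr] := K_uub; exists r => x; exact: Kr. Qed.

HB.instance Definition _ := Kernel_isFinite.Build _ _ _ _ R ksnd ksnd_uub.

Lemma integral_mpush f : (forall z, 0 <= f z) -> measurable_fun [set: S] f ->
  \int[mmpush m K]_z f z = \int[m]_y (\int[K y]_z f z).
Proof. exact: (integral_kcomp kconst ksnd tt). Qed.

End integral_mpush.

Section discounted.
Context {R : realType} {d} {S : measurableType d}.
Variables (gamma : R) (rho : {measure set S -> \bar R}) (K : R.-ker S ~> S).
Hypotheses (gamma0 : 0 <= gamma) (gamma1 : gamma < 1).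
Hypotheses (rho1 : rho setT = 1%E) (K1 : forall s, K s setT = 1%E).
Variable mu : {measure set S -> \bar R}.
Hypothesis mu_def : forall U, measurable U -> mu U =
  ((1 - gamma)%:E * \sum_(0 <= t <oo) (gamma ^+ t)%:E * miter rho K t U)%E.
Local Open Scope ereal_scope.

Lemma miter_setT t : miter rho K t setT = 1.
Proof.
elim: t => [//|t IH] /=.
by rewrite /mpush (eq_integral (cst 1)) ?integral_cst ?IH ?mul1e// => s _.
Qed.

Lemma integral_disc f : (forall x, 0 <= f x) -> measurable_fun setT f ->
  \int[mu]_x f x =
  (1 - gamma)%:E * \sum_(0 <= t <oo) (gamma ^+ t)%:E * \int[miter rho K t]_x f x.
Proof.
move=> f0 mf; have g1 : (0 <= 1 - gamma)%R by rewrite subr_ge0 ltW.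
have gt t : (0 <= gamma ^+ t)%R by exact: exprn_ge0.
pose nu := mscale (NngNum g1)
  (mseries (fun t => mscale (NngNum (gt t)) (miter rho K t)) 0).
rewrite (eq_measure_integral nu); last by move=> U mU _; rewrite mu_def.
rewrite ge0_integral_mscale//= ge0_integral_measure_series//.
by congr (_ * _); apply: eq_eseriesr => t _; rewrite ge0_integral_mscale.
Qed.

Lemma disc_setT : mu setT = 1.
Proof.
rewrite mu_def//; under eq_eseriesr do rewrite miter_setT mule1.
by rewrite nneseries_geometric ?gamma0// -EFinM mulfV// subr_eq0 gt_eqF.
Qed.

Lemma integral_disc_fixpoint f : (forall x, 0 <= f x) -> measurable_fun setT f ->
  \int[mu]_x f x = (1 - gamma)%:E * \int[rho]_x f x +
                   gamma%:E * \int[mu]_s (\int[K s]_x f x).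
Proof.
move=> f0 mf.
have Kf0 s : 0 <= \int[K s]_x f x by exact: integral_ge0.
have mKf : measurable_fun setT (fun s => \int[K s]_x f x).
  by apply: measurable_fun_integral_kernel => // U mU; exact: measurable_kernel.
have K_uub : measure_fam_uub K by exists 2%R => s; rewrite K1 lte_fin ltr1n.
have term_ge0 (h : S -> \bar R) t : (forall x, 0 <= h x) ->
    0 <= (gamma ^+ t)%:E * \int[miter rho K t]_x h x.
  by move=> h0; rewrite mule_ge0 ?lee_fin ?exprn_ge0//; exact: integral_ge0.
rewrite integral_disc// (integral_disc (fun s => \int[K s]_x f x))//.
rewrite nneseries_recl//; last by move=> t _; exact: term_ge0 f0.
rewrite /= expr0 mul1e -(@nneseries_addn _ _ 1); last by move=> t; exact: term_ge0 f0.
under eq_eseriesr => t _.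
  rewrite addn1 /= integral_mpush ?miter_setT ?ltry// exprS EFinM -muleA.
  over.
rewrite nneseriesZl; last by move=> t _; exact: term_ge0 Kf0.
rewrite muleDr//; last first.
  apply: ge0_adde_def; rewrite inE ?integral_ge0// mule_ge0 ?lee_fin//.
  by apply: nneseries_ge0 => t _ _; exact: (term_ge0 _ _ Kf0).
by congr (_ + _); rewrite muleA [X in X * _]muleC -muleA.
Qed.

Lemma mean_disc_fixpoint M g : mbounded M g ->
  mean mu g = ((1 - gamma) * mean rho g + gamma * mean mu (kmean K g))%R.
Proof.
move=> gM; pose h x := (g x + M)%R; have hM : mbounded (M + M) h := mbounded_addr gM.
have hE0 x : 0 <= (h x)%:E by rewrite lee_fin (mbounded_addr_ge0 x gM).
have mhE : measurable_fun setT (fun x => (h x)%:E).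
  by apply/measurable_EFinP; case: hM.
have := integral_disc_fixpoint _ hE0 mhE.
rewrite (integral_mean disc_setT hM) (integral_mean rho1 hM).
under [X in _ = _ + _ * X]eq_integral do rewrite (integral_mean (K1 _) hM).
rewrite (integral_mean disc_setT (mbounded_kmean K1 hM)) -!EFinM -EFinD.
have -> : kmean K h = fun s => (kmean K g s + M)%R.
  by apply/funext => s; exact: (kmean_add_cst M s K1 gM).
rewrite (mean_add_cst disc_setT M gM) (mean_add_cst rho1 M gM).
rewrite (mean_add_cst disc_setT M (mbounded_kmean K1 gM)).
by case=> e; apply: (addIr M); rewrite e; ring.
Qed.

End discounted.

Section ss_kernel.
Context {R : realType} {dS dA} {S : measurableType dS} {A : measurableType dA}.
Local Open Scope ereal_scope.

Lemma ss_kernel_setT (pi : R.-pker S ~> A) (p : R.-pker (S * A)%type ~> S) s :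
  ss_kernel pi p s setT = 1.
Proof.
rewrite /ss_kernel /= /kcomp (eq_integral (cst 1)) ?integral_cst ?prob_kernel ?mul1e//.
by move=> a _; rewrite prob_kernel.
Qed.

Lemma mbounded_pair2 {G : S * A -> R} {M} s :
  mbounded M G -> mbounded M (fun a => G (s, a)).
Proof. by case=> mG GM; split=> [|a]; [exact: measurable_fun_pair2 | exact: GM]. Qed.

Lemma kmean_ss_kernel (pi : R.-pker S ~> A) (p : R.-pker (S * A)%type ~> S)
    {M g} s : mbounded M g ->
  kmean (ss_kernel pi p) g s = mean (pi s) (fun a => kmean p g (s, a)).
Proof.
move=> gM; have pi1 := @prob_kernel _ _ _ _ _ pi; have p1 := @prob_kernel _ _ _ _ _ p.
have GM : mbounded M (fun a => kmean p g (s, a)).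
  exact/mbounded_pair2/(mbounded_kmean p1 gM).
apply: (addIr M); rewrite -(kmean_add_cst _ _ (ss_kernel_setT pi p) gM).
rewrite -(mean_add_cst (pi1 s) _ GM) /kmean /mean /ss_kernel integral_kcomp//.
- congr fine; apply: eq_integral => a _.
  rewrite (integral_mean (p1 (s, a)) (mbounded_addr gM)).
  exact: (congr1 EFin (kmean_add_cst M (s, a) p1 gM)).
- by move=> x; rewrite lee_fin (mbounded_addr_ge0 x gM).
- by apply/measurable_EFinP; case: (mbounded_addr gM).
Qed.

End ss_kernel.

Section lipschitz_ss_kernel.
Context {R : realType} {dS dA} {S : measurableType dS} {A : measurableType dA}.
Variables (dist_S : S -> S -> R) (dist_A : A -> A -> R).
Variables (pi : R.-pker S ~> A) (p : R.-pker (S * A)%type ~> S) (L_pi L_p : R).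
Hypothesis L_p0 : 0 <= L_p.
Hypothesis piLC : forall s sb : S,
  (Wdist dist_A (pi s) (pi sb) <= (L_pi * dist_S s sb)%:E)%E.
Hypothesis pLC : forall (s sb : S) (a ab : A),
  (Wdist dist_S (p (s, a)) (p (sb, ab)) <= (L_p * (dist_S s sb + dist_A a ab))%:E)%E.
Local Open Scope ereal_scope.

Let pi1 : forall s, pi s setT = 1 := prob_kernel.
Let p1 : forall x, p x setT = 1 := prob_kernel.

Definition sum_dist (x y : S * A) : R := (dist_S x.1 y.1 + dist_A x.2 y.2)%R.

Lemma lipschitz_kmean_pker {M c g} : (0 <= c)%R -> mbounded M g ->
  lipschitz_by dist_S c g -> lipschitz_by sum_dist (c * L_p) (kmean p g).
Proof.
move=> c0 gM gc [s a] [sb ab]; rewrite -lee_fin -mulrA EFinM.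
apply: le_trans (dist_mean_le_Wdist _ (p1 (s, a)) (p1 (sb, ab)) c0 gM gc) _.
by rewrite lee_wpmul2l ?lee_fin.
Qed.

Hypotheses (dist_S0 : forall s, dist_S s s = 0%R).
Hypotheses (dist_A0 : forall a, dist_A a a = 0%R).

Lemma lipschitz_kmean_ss_kernel M c g : (0 <= c)%R -> mbounded M g ->
  lipschitz_by dist_S c g ->
  lipschitz_by dist_S (c * (L_p * (1 + L_pi))) (kmean (ss_kernel pi p) g).
Proof.
move=> c0 gM gc s sb; rewrite !(kmean_ss_kernel _ _ _ gM).
set G := kmean p g; have GM : mbounded M G := mbounded_kmean p1 gM.
have GL := lipschitz_kmean_pker c0 gM gc.
have cLp0 : (0 <= c * L_p)%R by rewrite mulr_ge0.
apply: le_trans (ler_distD (mean (pi s) (fun a => G (sb, a))) _ _) _.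
rewrite [X in (_ <= X)%R](_ : _ =
  c * L_p * dist_S s sb + c * L_p * (L_pi * dist_S s sb))%R; last by ring.
apply: lerD.
- apply: (dist_mean_le_uniform (pi1 s) _ (mbounded_pair2 s GM)
    (mbounded_pair2 sb GM)) => a.
  by have := GL (s, a) (sb, a); rewrite /sum_dist /= dist_A0 addr0.
- rewrite -lee_fin EFinM.
  apply: le_trans (dist_mean_le_Wdist dist_A (pi1 s) (pi1 sb) cLp0
    (mbounded_pair2 sb GM) _) _.
    by move=> a ab; have := GL (sb, a) (sb, ab); rewrite /sum_dist /= dist_S0 add0r.
  by rewrite lee_wpmul2l ?lee_fin.
Qed.

End lipschitz_ss_kernel.

Section contraction.
Context {R : realType} {d} {S : measurableType d} (dist_S : S -> S -> R).
Variables (gamma L : R) (rho : {measure set S -> \bar R}) (K K' : R.-ker S ~> S).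
Variables (mu mu' : {measure set S -> \bar R}).
Hypotheses (gamma0 : 0 <= gamma) (gamma1 : gamma < 1) (L0 : 0 <= L).
Hypothesis contr : gamma * L < 1.
Hypothesis dist_S_ge0 : forall x y, 0 <= dist_S x y.
Hypotheses (K1 : forall s, K s setT = 1%E) (K'1 : forall s, K' s setT = 1%E).
Hypotheses (mu1 : mu setT = 1%E) (mu'1 : mu' setT = 1%E).
Hypothesis mu_fix : forall M g, mbounded M g ->
  mean mu g = (1 - gamma) * mean rho g + gamma * mean mu (kmean K g).
Hypothesis mu'_fix : forall M g, mbounded M g ->
  mean mu' g = (1 - gamma) * mean rho g + gamma * mean mu' (kmean K' g).
Hypothesis K'_lip : forall M c g, 0 <= c -> mbounded M g ->
  lipschitz_by dist_S c g -> lipschitz_by dist_S (c * L) (kmean K' g).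

Lemma mean_disc_diff {M g} : mbounded M g ->
  mean mu' g - mean mu g =
  gamma * (mean mu' (kmean K' g) - mean mu (kmean K' g)) +
  gamma * (mean mu (kmean K' g) - mean mu (kmean K g)).
Proof. by move=> gM; rewrite (mu'_fix _ _ gM) (mu_fix _ _ gM); ring. Qed.

Lemma dist_mean_kmean_le {M c g} : 0 <= c -> mbounded M g ->
  lipschitz_by dist_S c g ->
  ((`|mean mu (kmean K' g) - mean mu (kmean K g)|)%:E <=
   c%:E * \int[mu]_s Wdist dist_S (K' s) (K s))%E.
Proof.
move=> c0 gM gc.
apply: (dist_mean_le_integralZ mu1 _ _ (mbounded_kmean K'1 gM)
  (mbounded_kmean K1 gM)) => // s.
  exact: Wdist_ge0.
exact: dist_mean_le_Wdist (K'1 s) (K1 s) c0 gM gc.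
Qed.

Lemma dist_mean_disc_le_iter {r} n {M c g} :
  (\int[mu]_s Wdist dist_S (K' s) (K s) = r%:E)%E ->
  0 <= c -> mbounded M g -> lipschitz_by dist_S c g ->
  `|mean mu' g - mean mu g| <=
    gamma ^+ n * (M + M) + gamma * c * r / (1 - gamma * L).
Proof.
move=> Wr; have q_gt0 : 0 < 1 - gamma * L by rewrite subr_gt0.
elim: n M c g => [|n IH] M c g c0 gM gc.
  have r0 : 0 <= r.
    rewrite -lee_fin -Wr; apply: integral_ge0 => s _; exact: Wdist_ge0.
  rewrite expr0 mul1r -[leLHS]addr0; apply: lerD.
    apply: le_trans (ler_normB _ _) _.
    exact: lerD (norm_mean_le mu'1 gM) (norm_mean_le mu1 gM).
  by rewrite divr_ge0 ?mulr_ge0// ltW.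
have IHK := IH M (c * L) (kmean K' g) (mulr_ge0 c0 L0)
  (mbounded_kmean K'1 gM) (K'_lip _ _ _ c0 gM gc).
have := dist_mean_kmean_le c0 gM gc; rewrite Wr -EFinM lee_fin => D.
rewrite (mean_disc_diff gM); apply: le_trans (ler_normD _ _) _.
rewrite !normrM ger0_norm// exprS.
rewrite [X in _ <= X](_ : _ = gamma * (gamma ^+ n * (M + M) +
  gamma * (c * L) * r / (1 - gamma * L)) + gamma * (c * r)); last first.
  by field; rewrite gt_eqF.
by rewrite lerD// ler_wpM2l.
Qed.

Lemma Wdist_disc_le : (Wdist dist_S mu' mu <=
  (gamma / (1 - gamma * L))%:E * \int[mu]_s Wdist dist_S (K' s) (K s))%E.
Proof.
have q_gt0 : 0 < 1 - gamma * L by rewrite subr_gt0.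
apply: ge_ereal_sup => _ [f [mf [M fM] lf] <-].
have gM : mbounded M f by [].
have lf1 : lipschitz_by dist_S 1 f by move=> x y; rewrite mul1r.
rewrite (integral_mean mu'1 gM) (integral_mean mu1 gM) -EFinB abse_EFin.
have W0 : (0 <= \int[mu]_s Wdist dist_S (K' s) (K s))%E.
  by apply: integral_ge0 => s _; exact: Wdist_ge0.
case Wr : (\int[mu]_s Wdist dist_S (K' s) (K s))%E W0 => [r| |]// _.
  rewrite -EFinM lee_fin; apply: (le_geometric_bound gamma (M + M)).
    by rewrite gamma0.
  by move=> n; have := dist_mean_disc_le_iter n Wr ler01 gM lf1; rewrite mulr1 mulrAC.
(* If gamma = 0 the bound is 0 * +oo = 0, so it must be proved exactly. *)
have [gamma_eq0|gamma_neq0] := eqVneq gamma 0.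
  by rewrite (mean_disc_diff gM) gamma_eq0 !mul0r addr0 normr0 mul0e.
by rewrite gt0_muley ?leey// lte_fin divr_gt0// lt_def gamma_neq0.
Qed.

End contraction.

Theorem theorem1 (R : realType)
    (dS dA : measure_display) (S : measurableType dS) (A : measurableType dA)
    (dist_S : S -> S -> R) (dist_A : A -> A -> R)
    (metS : is_metric dist_S) (metA : is_metric dist_A)
    (borS : borel_of dist_S) (borA : borel_of dist_A)
    (gamma : R) (gamma0 : 0 <= gamma) (gamma1 : gamma < 1)
    (rho : probability S R)
    (pi pi' : R.-pker S ~> A) (p p' : R.-pker (S * A)%type ~> S)
    (mu mu' : {measure set S -> \bar R})
    (mu_def : forall U, measurable U -> mu U = disc_stat gamma rho pi p U)
    (mu'_def : forall U, measurable U -> mu' U = disc_stat gamma rho pi' p' U)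
    (L_pi' L_p' : R) (L_pi'0 : 0 <= L_pi') (L_p'0 : 0 <= L_p')
    (pi'LC : forall s sb : S,
        (Wdist dist_A (pi' s) (pi' sb) <= (L_pi' * dist_S s sb)%:E)%E)
    (p'LC : forall (s sb : S) (a ab : A),
        (Wdist dist_S (p' (s, a)) (p' (sb, ab))
           <= (L_p' * (dist_S s sb + dist_A a ab))%:E)%E)
    (contr : gamma * L_p' * (1 + L_pi') < 1) :
  (Wdist dist_S mu' mu
   <= (gamma / (1 - gamma * L_p' * (1 + L_pi')))%:E *
      \int[mu]_s Wdist dist_S (ss_kernel pi' p' s) (ss_kernel pi p s))%E.
Proof.
have [dist_S_ge0 [dist_S_eq0 _]] := metS; have [_ [dist_A_eq0 _]] := metA.
have dist_S0 s : dist_S s s = 0 by apply/dist_S_eq0.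
have dist_A0 a : dist_A a a = 0 by apply/dist_A_eq0.
have rho1 := probability_setT rho.
have K1 := ss_kernel_setT pi p; have K'1 := ss_kernel_setT pi' p'.
have L0 : 0 <= L_p' * (1 + L_pi') by rewrite mulr_ge0 ?addr_ge0.
rewrite -mulrA in contr *.
exact: (Wdist_disc_le dist_S _ _ rho _ _ mu mu' gamma0 gamma1 L0 contr dist_S_ge0
  K1 K'1 (disc_setT _ _ _ gamma0 gamma1 rho1 K1 _ mu_def)
  (disc_setT _ _ _ gamma0 gamma1 rho1 K'1 _ mu'_def)
  (mean_disc_fixpoint _ _ _ gamma0 gamma1 rho1 K1 _ mu_def)
  (mean_disc_fixpoint _ _ _ gamma0 gamma1 rho1 K'1 _ mu'_def)
  (lipschitz_kmean_ss_kernel _ _ _ _ _ _ L_p'0 pi'LC p'LC dist_S0 dist_A0)).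
Qed.
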